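(* Let $\boldsymbol u_1,\ldots,\boldsymbol u_p\in L^2(\Omega,\mathbb R^n)$. Define recursively $$\boldsymbol v_1=\boldsymbol u_1,\qquad \boldsymbol v_i=\boldsymbol u_i-\sum_{k=1}^{i-1}Z_{ik}\boldsymbol v_k\quad(i=2,\ldots,p),$$ where $$Z_{ik}=\mathbb E_{u_iv_k}\mathbb E_{v_kv_k}^{\dagger}+A_{ik}\big(I-\mathbb E_{v_kv_k}\mathbb E_{v_kv_k}^{\dagger}\big)$$ with arbitrary matrices $A_{ik}\in\mathbb R^{n\times n}$ (no invertibility of $\mathbb E_{v_kv_k}$ is assumed). Then $\boldsymbol v_1,\ldots,\boldsymbol v_p$ are pairwise orthogonal: $\mathbb E_{v_iv_j}=\mathbb O$ for all $i\neq j$.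
   Context: $(\Omega,\Sigma,\mu)$ is a probability space and $E[\cdot]$ denotes expectation. For random vectors $\boldsymbol g,\boldsymbol h$, $\mathbb E_{gh}:=E[\boldsymbol g\boldsymbol h^T]-E[\boldsymbol g]E[\boldsymbol h]^T$. $M^\dagger$ denotes the Moore–Penrose pseudo-inverse of a matrix $M$. Matrices act on random vectors pointwise in $\omega$. *)

From HB Require Import structures.
From mathcomp Require Import all_boot all_order all_algebra.
From mathcomp Require Import all_classical all_reals all_analysis.
Set Implicit Arguments. Unset Strict Implicit. Unset Printing Implicit Defensive.
Import Order.TTheory GRing.Theory Num.Theory.
Local Open Scope classical_set_scope.
Local Open Scope ring_scope.

Definition is_MP_inverse (R : realType) (m n : nat)
  (M : 'M[R]_(m, n)) (X : 'M[R]_(n, m)) : Prop :=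
  [/\ M *m X *m M = M, X *m M *m X = X,
      (M *m X)^T = M *m X & (X *m M)^T = X *m M].

Definition mp_pinv (R : realType) (m n : nat) (M : 'M[R]_(m, n)) : 'M[R]_(n, m) :=
  xget 0 [set X | is_MP_inverse M X].

Section Expect.
Context {d : measure_display} {T : measurableType d} {R : realType}
  (P : probability T R).

Definition Emx (a b : nat) (X : T -> 'M[R]_(a, b)) : 'M[R]_(a, b) :=
  \matrix_(i, j) fine (\int[P]_w (X w i j)%:E)%E.

Definition covmx (n m : nat) (g : T -> 'cV[R]_n) (h : T -> 'cV[R]_m)
  : 'M[R]_(n, m) :=
  Emx (fun w => g w *m (h w)^T) - Emx g *m (Emx h)^T.

Definition L2vec (n : nat) (g : T -> 'cV[R]_n) : Prop :=
  forall j : 'I_n, measurable_fun setT (fun w => g w j 0) /\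
    P.-integrable setT (fun w => ((g w j 0) ^+ 2)%:E).

End Expect.

From HB Require Import structures.
From mathcomp Require Import all_boot all_order all_algebra.
From mathcomp Require Import all_classical all_reals all_analysis.
Import Order.TTheory GRing.Theory Num.Theory.
Local Open Scope ring_scope.
Set Implicit Arguments. Unset Strict Implicit. Unset Printing Implicit Defensive.

(* For j < i, bilinearity and induction reduce E_{v_i v_j} to
   E_{u_i v_j} - Z_ij E_{v_j v_j}.  With C := E_{v_j v_j}, the Penrose equation
   C C^+ C = C kills the arbitrary term A_ij (I - C C^+) C, and
   E_{u_i v_j} C^+ C = E_{u_i v_j} because E_{u_i v_j} vanishes on the kernel of
   C: if C b = 0 then b^T v_j has zero variance, hence by Cauchy-Schwarz zero
   covariance with every coordinate of u_i. *)

Section real_covariance.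
Context {d : measure_display} {T : measurableType d} {R : realType}
  (P : probability T R).
Notation L2 := (Lfun P 2%:E).

Definition Rcovariance (f g : T -> R) : R := fine (covariance P f g).

Let L2_L1 f : f \in L2 -> f \in Lfun P 1.
Proof. exact/Lfun_subset12/fin_num_measure. Qed.

Lemma sqr_integrable_Lfun2 (f : T -> R) : measurable_fun setT f ->
  P.-integrable setT (fun w => (f w ^+ 2)%:E) -> f \in L2.
Proof.
move=> mf if2; rewrite inE; apply/andP; split; first by rewrite inE.
rewrite inE /= /finite_norm unlock /Lnorm poweR_lty //.
under eq_integral => x _ do rewrite /= powR_mulrn // -normrX ger0_norm ?sqr_ge0 //.
case/integrableP: if2 => _ /(le_lt_trans _); apply.
under [leRHS]eq_integral => x _.
  by rewrite gee0_abs; [over | exact: sqr_ge0].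
done.
Qed.

Lemma Lfun2_scale a f : f \in L2 -> a \o* f \in L2.
Proof. by move=> f2; rewrite Lfun_scale // ler1n. Qed.

Lemma RcovarianceE f g : f \in L2 -> g \in L2 ->
  Rcovariance f g = fine 'E_P[f * g] - fine 'E_P[f] * fine 'E_P[g].
Proof.
move=> f2 g2; rewrite /Rcovariance covarianceE ?Lfun2_mul_Lfun1 ?L2_L1 //.
rewrite fineB ?fineM ?fin_numM ?expectation_fin_num ?Lfun2_mul_Lfun1 ?L2_L1 //.
Qed.

Lemma Rcovariance_EFin f g : f \in L2 -> g \in L2 ->
  covariance P f g = (Rcovariance f g)%:E.
Proof.
by move=> f2 g2; rewrite fineK // covariance_fin_num ?Lfun2_mul_Lfun1 ?L2_L1.
Qed.

Lemma Lfun2_sum (I : Type) (s : seq I) (F : I -> T -> R) :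
  (forall i, F i \in L2) -> \sum_(i <- s) F i \in L2.
Proof. by move=> F2; rewrite rpred_sum ?lee1n. Qed.

Lemma RcovarianceDl f1 f2 g : f1 \in L2 -> f2 \in L2 -> g \in L2 ->
  Rcovariance (f1 + f2) g = Rcovariance f1 g + Rcovariance f2 g.
Proof.
move=> f12 f22 g2; apply: EFin_inj.
rewrite EFinD -!Rcovariance_EFin ?rpredD ?lee1n //; exact: covarianceDl.
Qed.

Lemma RcovarianceBl f1 f2 g : f1 \in L2 -> f2 \in L2 -> g \in L2 ->
  Rcovariance (f1 - f2) g = Rcovariance f1 g - Rcovariance f2 g.
Proof.
move=> f12 f22 g2; apply: EFin_inj.
rewrite EFinB -!Rcovariance_EFin ?rpredB ?lee1n //; exact: covarianceBl.
Qed.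

Lemma RcovarianceZl a f g : f \in L2 -> g \in L2 ->
  Rcovariance (a \o* f) g = a * Rcovariance f g.
Proof.
move=> f2 g2; apply: EFin_inj.
rewrite EFinM -!Rcovariance_EFin ?Lfun2_scale //.
by rewrite covarianceZl ?Lfun2_mul_Lfun1 ?L2_L1.
Qed.

Lemma Rcovariance_suml (I : Type) (s : seq I) (F : I -> T -> R) g :
  (forall i, F i \in L2) -> g \in L2 ->
  Rcovariance (\sum_(i <- s) F i) g = \sum_(i <- s) Rcovariance (F i) g.
Proof.
move=> F2 g2; elim: s => [|i s IH].
  by rewrite !big_nil /Rcovariance [covariance _ _ _](covariance_cst_l P 0 g).
by rewrite !big_cons RcovarianceDl ?IH ?Lfun2_sum.
Qed.

Lemma Rcovariance_lincombl (I : Type) (s : seq I) (c : I -> R) (F : I -> T -> R) g :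
  (forall i, F i \in L2) -> g \in L2 ->
  Rcovariance (\sum_(i <- s) c i \o* F i) g = \sum_(i <- s) c i * Rcovariance (F i) g.
Proof.
move=> F2 g2; rewrite Rcovariance_suml //; last by move=> i; exact: Lfun2_scale.
by apply: eq_bigr => i _; rewrite RcovarianceZl.
Qed.

Lemma Rcovariance_eq0 f g : f \in L2 -> g \in L2 ->
  Rcovariance g g = 0 -> Rcovariance f g = 0.
Proof.
move=> f2 g2 Vg0.
have Vg : variance P g = 0%E by rewrite /variance Rcovariance_EFin // Vg0.
have le0 h : h \in L2 -> Rcovariance h g <= 0.
  move=> h2; rewrite -lee_fin -Rcovariance_EFin //.
  by apply: le_trans (covariance_le h2 g2) _; rewrite Vg sqrte0 mule0.
apply/eqP; rewrite eq_le le0 //= -oppr_le0 -[X in X <= 0]mulN1r -RcovarianceZl //.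
exact/le0/Lfun2_scale.
Qed.

End real_covariance.

Section covariance_matrix.
Context {d : measure_display} {T : measurableType d} {R : realType}
  (P : probability T R).
Notation L2 := (Lfun P 2%:E).

Definition coord_rv n (x : T -> 'cV[R]_n) (r : 'I_n) : T -> R := fun w => x w r 0.

Lemma L2vecP n (x : T -> 'cV[R]_n) : L2vec P x <-> forall r, coord_rv x r \in L2.
Proof.
split=> [x2 r|x2 r]; first by have [] := x2 r; exact: sqr_integrable_Lfun2.
split; last exact: (Lfun2_integrable_sqr (x2 r)).
by have /sub_Lfun_mfun := x2 r; rewrite inE.
Qed.

Lemma L2vec_coord n (x : T -> 'cV[R]_n) r : L2vec P x -> coord_rv x r \in L2.
Proof. by move/L2vecP. Qed.

Lemma covmx_entry n m (x : T -> 'cV[R]_n) (y : T -> 'cV[R]_m) r s :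
  L2vec P x -> L2vec P y ->
  covmx P x y r s = Rcovariance P (coord_rv x r) (coord_rv y s).
Proof.
move=> /L2vecP x2 /L2vecP y2.
rewrite RcovarianceE // /covmx /Emx !mxE big_ord1 !mxE expectation.unlock.
by congr (fine _ - _); apply: eq_integral => w _; rewrite !mxE big_ord1 !mxE.
Qed.

Lemma covmx_trC n m (x : T -> 'cV[R]_n) (y : T -> 'cV[R]_m) :
  covmx P x y = (covmx P y x)^T.
Proof.
apply/matrixP => r s; rewrite /covmx /Emx !mxE !big_ord1 !mxE mulrC.
by congr (fine _ - _); apply: eq_integral => w _; rewrite !mxE !big_ord1 !mxE mulrC.
Qed.

Section linearity.
Variable n : nat.
Implicit Types x y : T -> 'cV[R]_n.

Lemma coord_rvB x y r :
  coord_rv (fun w => x w - y w) r = coord_rv x r - coord_rv y r.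
Proof. by apply/funext => w; rewrite /coord_rv !mxE. Qed.

Lemma coord_rv_sum (I : Type) (s : seq I) (x : I -> T -> 'cV[R]_n) r :
  coord_rv (fun w => \sum_(i <- s) x i w) r = \sum_(i <- s) coord_rv (x i) r.
Proof. by apply/funext => w; rewrite fct_sumE /coord_rv summxE. Qed.

Lemma coord_rv_mulmx m (M : 'M[R]_(m, n)) x r :
  coord_rv (fun w => M *m x w) r = \sum_l M r l \o* coord_rv x l.
Proof.
apply/funext => w; rewrite fct_sumE /coord_rv mxE.
by apply: eq_bigr => l _ /=; rewrite mulrC.
Qed.

Lemma L2vecB x y : L2vec P x -> L2vec P y -> L2vec P (fun w => x w - y w).
Proof.
by move=> /L2vecP x2 /L2vecP y2; apply/L2vecP => r; rewrite coord_rvB rpredB ?lee1n.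
Qed.

Lemma L2vec_sum (I : Type) (s : seq I) (x : I -> T -> 'cV[R]_n) :
  (forall i, L2vec P (x i)) -> L2vec P (fun w => \sum_(i <- s) x i w).
Proof.
move=> x2; apply/L2vecP => r.
by rewrite coord_rv_sum Lfun2_sum // => i; exact: L2vec_coord.
Qed.

Lemma L2vec_mulmx m (M : 'M[R]_(m, n)) x : L2vec P x -> L2vec P (fun w => M *m x w).
Proof.
move=> /L2vecP x2; apply/L2vecP => r.
by rewrite coord_rv_mulmx Lfun2_sum // => l; exact: Lfun2_scale.
Qed.

Variables (m : nat) (z : T -> 'cV[R]_m).
Hypothesis z2 : L2vec P z.

Lemma covmxBl x y : L2vec P x -> L2vec P y ->
  covmx P (fun w => x w - y w) z = covmx P x z - covmx P y z.
Proof.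
move=> x2 y2; have xy2 := L2vecB x2 y2; apply/matrixP => r s.
rewrite [RHS]mxE [X in _ + X]mxE !covmx_entry // coord_rvB.
by rewrite RcovarianceBl //; exact: L2vec_coord.
Qed.

Lemma covmx_suml (I : Type) (s : seq I) (x : I -> T -> 'cV[R]_n) :
  (forall i, L2vec P (x i)) ->
  covmx P (fun w => \sum_(i <- s) x i w) z = \sum_(i <- s) covmx P (x i) z.
Proof.
move=> x2; have sx2 := L2vec_sum s x2; apply/matrixP => r t.
rewrite summxE covmx_entry // coord_rv_sum Rcovariance_suml; last exact: L2vec_coord.
  by apply: eq_bigr => i _; rewrite covmx_entry.
by move=> i; exact: L2vec_coord.
Qed.

Lemma covmx_mulmxl k (M : 'M[R]_(k, n)) x : L2vec P x ->
  covmx P (fun w => M *m x w) z = M *m covmx P x z.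
Proof.
move=> x2; have Mx2 := L2vec_mulmx M x2; apply/matrixP => r s.
rewrite [RHS]mxE covmx_entry // coord_rv_mulmx.
rewrite Rcovariance_lincombl; last exact: L2vec_coord.
  by apply: eq_bigr => l _; rewrite covmx_entry.
by move=> l; exact: L2vec_coord.
Qed.

End linearity.

Lemma covmx_mulmxr n m k (M : 'M[R]_(k, m)) (x : T -> 'cV[R]_n) (y : T -> 'cV[R]_m) :
  L2vec P x -> L2vec P y -> covmx P x (fun w => M *m y w) = covmx P x y *m M^T.
Proof.
by move=> x2 y2; rewrite covmx_trC covmx_mulmxl // trmx_mul -covmx_trC.
Qed.

Lemma covmx_eq0 n m (x : T -> 'cV[R]_n) (y : T -> 'cV[R]_m) :
  L2vec P x -> L2vec P y -> covmx P y y = 0 -> covmx P x y = 0.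
Proof.
move=> x2 y2 /matrixP yy0; apply/matrixP => r s; rewrite [RHS]mxE covmx_entry //.
apply: Rcovariance_eq0; [exact: L2vec_coord.. |].
by have := yy0 s s; rewrite covmx_entry // mxE.
Qed.

Lemma covmx_mulmx_eq0 n m k (x : T -> 'cV[R]_n) (y : T -> 'cV[R]_m) (B : 'M[R]_(m, k)) :
  L2vec P x -> L2vec P y -> covmx P y y *m B = 0 -> covmx P x y *m B = 0.
Proof.
move=> x2 y2 yyB0; have By2 := L2vec_mulmx B^T y2.
rewrite -[B]trmxK -covmx_mulmxr //; apply: covmx_eq0 => //.
by rewrite covmx_mulmxl // covmx_mulmxr // trmxK yyB0 mulmx0.
Qed.

End covariance_matrix.

Section Moore_Penrose.
Variable R : realType.

Lemma mulmx_tr_eq0 m n (X : 'M[R]_(m, n)) : X *m X^T = 0 -> X = 0.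
Proof.
move=> /matrixP XX0; apply/matrixP => i j; rewrite mxE.
have /eqP := XX0 i i; rewrite !mxE psumr_eq0; last first.
  by move=> k _; rewrite mxE -expr2 sqr_ge0.
by move/allP/(_ j (mem_index_enum _)); rewrite mxE /= -expr2 sqrf_eq0 => /eqP.
Qed.

Lemma row_free_gram_unit r n (C : 'M[R]_(r, n)) : row_free C -> C *m C^T \in unitmx.
Proof.
move=> fC; rewrite -row_free_unit -kermx_eq0; apply/eqP.
have KCC : kermx (C *m C^T) *m (C *m C^T) = 0 by apply/sub_kermxP.
have /eqP : kermx (C *m C^T) *m C = 0.
  by apply: mulmx_tr_eq0; rewrite trmx_mul mulmxA -(mulmxA _ C) KCC mul0mx.
by rewrite mulmx_free_eq0 // => /eqP.
Qed.

Lemma is_MP_inverse_full_rank_factor m n r (B : 'M[R]_(m, r)) (C : 'M[R]_(r, n)) :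
  row_free B^T -> row_free C -> exists X, is_MP_inverse (B *m C) X.
Proof.
move=> fB fC.
set G1 := C *m C^T; set G2 := B^T *m B.
have u1 : G1 \in unitmx by exact: row_free_gram_unit.
have u2 : G2 \in unitmx by have := row_free_gram_unit fB; rewrite trmxK.
have s1 : (invmx G1)^T = invmx G1 by rewrite trmx_inv /G1 trmx_mul trmxK.
have s2 : (invmx G2)^T = invmx G2 by rewrite trmx_inv /G2 trmx_mul trmxK.
exists (C^T *m invmx G1 *m invmx G2 *m B^T).
have MX : B *m C *m (C^T *m invmx G1 *m invmx G2 *m B^T) = B *m invmx G2 *m B^T.
  by rewrite !mulmxA -(mulmxA B C) -/G1 -(mulmxA B G1) mulmxV // mulmx1.
have XM : C^T *m invmx G1 *m invmx G2 *m B^T *m (B *m C) = C^T *m invmx G1 *m C.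
  by rewrite !mulmxA -(mulmxA _ B^T B) -/G2 -(mulmxA _ (invmx G2)) mulVmx // mulmx1.
split.
- by rewrite MX -!mulmxA (mulmxA B^T) -/G2 mulKmx.
- rewrite !mulmxA -(mulmxA _ B^T B) -/G2 -(mulmxA _ (invmx G2) G2) mulVmx // mulmx1.
  by rewrite -(mulmxA _ C C^T) -/G1 -(mulmxA _ (invmx G1) G1) mulVmx // mulmx1.
- by rewrite MX !trmx_mul trmxK s2 mulmxA.
- by rewrite XM !trmx_mul trmxK s1 mulmxA.
Qed.

Lemma MP_inverse_exists m n (M : 'M[R]_(m, n)) : exists X, is_MP_inverse M X.
Proof.
have fB : row_free (col_base M)^T by rewrite /row_free mxrank_tr; exact: col_base_full.
by have := is_MP_inverse_full_rank_factor fB (row_base_free M); rewrite mulmx_base.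
Qed.

Lemma mp_pinvP m n (M : 'M[R]_(m, n)) : is_MP_inverse M (mp_pinv M).
Proof. exact: (xgetPex 0 (MP_inverse_exists M)). Qed.

Lemma gain_mulmx k n (K A : 'M[R]_(k, n)) (C X : 'M[R]_n) :
  C *m X *m C = C -> K *m X *m C = K -> (K *m X + A *m (1%:M - C *m X)) *m C = K.
Proof.
by move=> CXC KXC; rewrite mulmxDl KXC -mulmxA mulmxBl mul1mx CXC subrr mulmx0 addr0.
Qed.

End Moore_Penrose.

Lemma covmx_mulmx_pinv (d : measure_display) (T : measurableType d) (R : realType)
  (P : probability T R) n m (x : T -> 'cV[R]_n) (y : T -> 'cV[R]_m) :
  L2vec P x -> L2vec P y ->
  covmx P x y *m mp_pinv (covmx P y y) *m covmx P y y = covmx P x y.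
Proof.
move=> x2 y2; have [CXC _ _ _] := mp_pinvP (covmx P y y).
apply/eqP; rewrite -subr_eq0 -[X in _ - X]mulmx1 -mulmxA -mulmxBr; apply/eqP.
by apply: covmx_mulmx_eq0 => //; rewrite mulmxBr mulmx1 mulmxA CXC subrr.
Qed.

Section orthogonalization.
Context {d : measure_display} {T : measurableType d} {R : realType}
  (P : probability T R) (n p : nat).
Variables (u v : nat -> T -> 'cV[R]_n) (A : nat -> nat -> 'M[R]_n).

Let Z i k := covmx P (u i) (v k) *m mp_pinv (covmx P (v k) (v k))
  + A i k *m (1%:M - covmx P (v k) (v k) *m mp_pinv (covmx P (v k) (v k))).

Hypothesis u2 : forall i, (i < p)%N -> L2vec P (u i).
Hypothesis vE : forall i, (i < p)%N -> forall w,
  v i w = u i w - \sum_(k < i) (Z i k *m v k w).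

Lemma L2vec_orth i : (i < p)%N -> L2vec P (v i).
Proof.
elim/ltn_ind: i => i IH ip; rewrite (funext (vE ip)).
apply: L2vecB (u2 ip) (L2vec_sum _ _) => k.
by apply/L2vec_mulmx/IH; last exact: ltn_trans ip.
Qed.

Lemma covmx_orth_lt i j : (i < p)%N -> (j < i)%N -> covmx P (v i) (v j) = 0.
Proof.
elim/ltn_ind: i j => i IH j ip ji.
have ui2 := u2 ip.
have vk2 (k : 'I_i) : L2vec P (v k) by apply: L2vec_orth; exact: ltn_trans ip.
have vj2 : L2vec P (v j) := vk2 (Ordinal ji).
have Zv2 (k : 'I_i) : L2vec P (fun w => Z i k *m v k w) := L2vec_mulmx _ (vk2 k).
have Zv_sum2 := L2vec_sum (index_enum 'I_i) Zv2.
have vkj0 (k : 'I_i) : k != Ordinal ji -> covmx P (v k) (v j) = 0.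
  move=> kj; have kp : (k < p)%N by exact: ltn_trans ip.
  case: (ltngtP k j) => [kj'|jk|kj']; last by case/eqP: kj; exact: val_inj.
  - by rewrite covmx_trC (IH j ji k (ltn_trans ji ip) kj') trmx0.
  - exact: IH.
have -> : covmx P (v i) (v j) = covmx P (u i) (v j) - Z i j *m covmx P (v j) (v j).
  rewrite (funext (vE ip)) covmxBl //.
  have /= -> := covmx_suml vj2 (index_enum _) Zv2.
  rewrite (bigD1 (Ordinal ji)) //= covmx_mulmxl // big1 ?addr0 // => k kj.
  by rewrite covmx_mulmxl // vkj0 ?mulmx0.
rewrite gain_mulmx ?subrr //; first by have [] := mp_pinvP (covmx P (v j) (v j)).
exact: covmx_mulmx_pinv.
Qed.

End orthogonalization.

Theorem lemma3 (d : measure_display) (T : measurableType d) (R : realType)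
  (P : probability T R) (n p : nat)
  (u v : nat -> T -> 'cV[R]_n) (A : nat -> nat -> 'M[R]_n) :
  (forall i, (i < p)%N -> L2vec P (u i)) ->
  (forall i, (i < p)%N -> forall w,
     v i w = u i w - \sum_(k < i)
       ((covmx P (u i) (v k) *m mp_pinv (covmx P (v k) (v k))
         + A i k *m (1%:M - covmx P (v k) (v k) *m mp_pinv (covmx P (v k) (v k))))
        *m v k w)) ->
  forall i j, (i < p)%N -> (j < p)%N -> i <> j -> covmx P (v i) (v j) = 0.
Proof.
move=> u2 vE i j ip jp; case: (ltngtP i j) => [ij|ji|->] // _.
- by rewrite covmx_trC (covmx_orth_lt u2 vE jp ij) trmx0.
- exact: (covmx_orth_lt u2 vE ip ji).
Qed.
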